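(* Fix integers $m\ge d\ge 1$ and put $\lambda=d/m$. Let $p$ and $q$ be monic polynomials of degree $d$ all of whose roots are real and nonnegative. Then \[ \mathcal{R}^{d,\lambda}_{\mathbb{S}[p \boxplus_{d,\lambda} q]}(s) = \mathcal{R}^{d,\lambda}_{\mathbb{S}p}(s) +\mathcal{R}^{d,\lambda}_{\mathbb{S}q}(s). \]
   Context: Rectangular finite convolution: for $p(x)=\sum_{i=0}^d(-1)^i a_i x^{d-i}$ and $q(x)=\sum_{i=0}^d(-1)^i b_i x^{d-i}$ define \[ (p\boxplus_{d,\lambda} q)(x)=\sum_{k=0}^d x^{d-k}(-1)^k\sum_{i+j=k}\frac{(d-i)!(d-j)!}{d!(d-k)!}\,\frac{(m-i)!(m-j)!}{m!(m-k)!}\,a_ib_j . \] (When $p=\det(xI_d-A^TA)$, $q=\det(xI_d-B^TB)$ for real $m\times d$ matrices $A,B$, this equals the average of $\det(xI_d-(A+QBR)^T(A+QBR))$ over Haar-distributed $Q\in\mathcal O_m$, $R\in\mathcal O_d$.) For a polynomial $p$ with nonnegative roots, $\mathbb{S}p(x):=p(x^2)$ is its symmetrization. Finite rectangular $R$-transform: for monic $p(x)=\sum_{i=0}^d(-1)^ip_ix^{d-i}$ with nonnegative roots, set \[ E_p(s):=\sum_{i=0}^d (-1)^i (md)^i\frac{(m-i)!(d-i)!}{m!\,d!}\,p_i\,s^i , \] and let $\mathcal{R}^{d,\lambda}_{\mathbb{S}p}(s)$ be the unique polynomial of degree at most $d$ such that $\mathcal{R}^{d,\lambda}_{\mathbb{S}p}(s)\equiv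 -\frac{s}{d}\frac{d}{ds}\log E_p(s)$ modulo $s^{d+1}$ (i.e. the coefficients of $s^0,\dots,s^d$ agree, as formal power series). *)

From HB Require Import structures.
From mathcomp Require Import all_boot all_order all_algebra.
Set Implicit Arguments. Unset Strict Implicit. Unset Printing Implicit Defensive.
Import Order.TTheory GRing.Theory Num.Theory.
Local Open Scope ring_scope.

Section RectConv.
Variable R : realFieldType.

(* For p(x) = \sum_i (-1)^i a_i x^(d-i), the coefficient a_i. *)
Definition acoef (d : nat) (p : {poly R}) (i : nat) : R :=
  (-1) ^+ i * p`_(d - i).

Definition convCoef (m d i j k : nat) : R :=
  ((d - i)`!%:R * (d - j)`!%:R / ((d`!)%:R * (d - k)`!%:R)) *
  ((m - i)`!%:R * (m - j)`!%:R / ((m`!)%:R * (m - k)`!%:R)).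

Definition rconv (m d : nat) (p q : {poly R}) : {poly R} :=
  \sum_(k < d.+1) ('X^(d - k) *
     ((-1) ^+ k * \sum_(i < k.+1)
        convCoef m d i (k - i) k * acoef d p i * acoef d q (k - i))%:P).

Definition Epoly (m d : nat) (p : {poly R}) : {poly R} :=
  \sum_(i < d.+1)
    ((-1) ^+ i * ((m * d) ^ i)%:R * ((m - i)`! * (d - i)`!)%:R
       / ((m`! * d`!)%:R) * acoef d p i) *: 'X^i.

(* Finite rectangular R-transform R^{d,λ}_{Sp}: the truncation modulo s^(d+1)
   of the formal power series  -(s/d) E_p'(s)/E_p(s) = -(s/d) (d/ds) log E_p(s).
   Since E_p(0) = 1 (p monic), 1/E_p = \sum_{k>=0} (1 - E_p)^k as formal power
   series, and modulo s^(d+1) only the terms k <= d matter. *)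
Definition Rtrans (m d : nat) (p : {poly R}) : {poly R} :=
  let E := Epoly m d p in
  let F := - (d%:R)^-1 *: ('X * E^`()) in
  take_poly d.+1 (F * \sum_(k < d.+1) (1 - E) ^+ k).

End RectConv.

(* The weights of E_p turn the rectangular convolution into multiplication of
   series: E_{p ⊞ q} = E_p E_q mod s^(d+1), the factorials of the convolution
   coefficients cancelling against those of E.  The map E |-> s E'/E, truncated
   mod s^n, only depends on E mod s^n and turns products of series with
   constant term 1 into sums; it is computed with the truncated geometric
   series \sum_(k < n) (1 - E)^k as inverse of E.  Only monicity of p and q
   (i.e. E_p(0) = E_q(0) = 1) is used, not the nonnegativity of their roots. *)
From HB Require Import structures.
From mathcomp Require Import all_boot all_order all_algebra.
From mathcomp Require Import ring zify.
Import Order.TTheory GRing.Theory Num.Theory.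
Local Open Scope ring_scope.

Set Implicit Arguments.
Unset Strict Implicit.

Section TruncatedSeries.
Variable R : comNzRingType.
Implicit Types a b E F : {poly R}.

Lemma take_polyMl n a b : take_poly n (take_poly n a * b) = take_poly n (a * b).
Proof.
by rewrite -[in RHS](poly_take_drop n a) mulrDl take_polyD mulrAC take_polyMXn_0 addr0.
Qed.

Lemma take_polyMr n a b : take_poly n (a * take_poly n b) = take_poly n (a * b).
Proof. by rewrite mulrC take_polyMl mulrC. Qed.

Lemma take_polyM_eq n a a' b b' :
  take_poly n a = take_poly n a' -> take_poly n b = take_poly n b' ->
  take_poly n (a * b) = take_poly n (a' * b').
Proof.
by move=> ea eb; rewrite -take_polyMl ea take_polyMl -take_polyMr eb take_polyMr.
Qed.

Lemma take_polyX_eq n k a b :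
  take_poly n a = take_poly n b -> take_poly n (a ^+ k) = take_poly n (b ^+ k).
Proof. by move=> eab; elim: k => // k IH; rewrite !exprS; apply: take_polyM_eq. Qed.

Lemma coef0_eq0_mulX a : a`_0 = 0 -> a = drop_poly 1 a * 'X.
Proof.
move=> a0; rewrite -[LHS](poly_take_drop 1 a) (size1_polyC (size_take_poly 1 a)).
by rewrite coef_take_poly a0 add0r.
Qed.

Lemma take_polyX_coef0_eq0 n a : a`_0 = 0 -> take_poly n (a ^+ n) = 0.
Proof. by move/coef0_eq0_mulX->; rewrite exprMn take_polyMXn_0. Qed.

Definition trunc_inv n E : {poly R} := \sum_(k < n) (1 - E) ^+ k.

Lemma take_poly_mul_trunc_inv n E :
  E`_0 = 1 -> take_poly n (E * trunc_inv n E) = take_poly n 1.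
Proof.
move=> E0; have -> : E * trunc_inv n E = 1 - (1 - E) ^+ n.
  have := subrX1 (1 - E) n; rewrite /trunc_inv.
  move: (\sum_(k < n) _) ((1 - E) ^+ n) => S P /(canRL (subrK 1)) ->; ring.
by rewrite raddfB /= take_polyX_coef0_eq0 ?subr0 // coefB coef1 E0 subrr.
Qed.

Lemma take_polyM_trunc_inv n a E : E`_0 = 1 ->
  take_poly n (a * (E * trunc_inv n E)) = take_poly n a.
Proof.
move=> E0; rewrite -[in RHS](mulr1 a).
by apply: take_polyM_eq => //; apply: take_poly_mul_trunc_inv.
Qed.

Lemma take_poly_trunc_inv n E F : take_poly n E = take_poly n F ->
  take_poly n (trunc_inv n E) = take_poly n (trunc_inv n F).
Proof.
move=> eEF; rewrite !take_poly_sum; apply: eq_bigr => k _.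
by apply: take_polyX_eq; rewrite !raddfB /= eEF.
Qed.

Lemma take_poly_inv_unique n E u v :
  take_poly n (E * u) = take_poly n 1 -> take_poly n (E * v) = take_poly n 1 ->
  take_poly n u = take_poly n v.
Proof.
move=> Eu Ev; rewrite -[u]mulr1 -[v]mul1r.
have uEv : take_poly n (u * (E * v)) = take_poly n (u * 1) by apply: take_polyM_eq.
have Euv : take_poly n ((E * u) * v) = take_poly n (1 * v) by apply: take_polyM_eq.
by rewrite -uEv -Euv mulrA [u * E]mulrC.
Qed.

Lemma coef_mulX_deriv a i : ('X * a^`())`_i = a`_i *+ i.
Proof. by rewrite coefXM coef_deriv; case: i => [|i]; rewrite ?mulr0n. Qed.

Lemma take_poly_mulX_deriv n a b : take_poly n a = take_poly n b ->
  take_poly n ('X * a^`()) = take_poly n ('X * b^`()).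
Proof.
move=> eab; apply/polyP => i; rewrite !coef_take_poly !coef_mulX_deriv.
case: ifP => // lt_in; have := congr1 (fun f : {poly R} => f`_i) eab.
by rewrite !coef_take_poly lt_in => ->.
Qed.

(* X E'/E = X (log E)' mod X^n, when E`_0 = 1. *)
Definition trunc_logder n E : {poly R} := take_poly n ('X * E^`() * trunc_inv n E).

Lemma trunc_logder_take n E F :
  take_poly n E = take_poly n F -> trunc_logder n E = trunc_logder n F.
Proof.
move=> eEF; apply: take_polyM_eq; first exact: take_poly_mulX_deriv.
exact: take_poly_trunc_inv.
Qed.

Lemma trunc_logderM n E F : E`_0 = 1 -> F`_0 = 1 ->
  trunc_logder n (E * F) = trunc_logder n E + trunc_logder n F.
Proof.
move=> E0 F0; set u := trunc_inv n E; set v := trunc_inv n F.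
have EF0 : (E * F)`_0 = 1 by rewrite coef0M E0 F0 mulr1.
have invEF : take_poly n (E * F * (u * v)) = take_poly n 1.
  by rewrite mulrACA take_polyM_trunc_inv // take_poly_mul_trunc_inv.
have -> : trunc_logder n (E * F) = take_poly n ('X * (E * F)^`() * (u * v)).
  have uv := take_poly_inv_unique (take_poly_mul_trunc_inv n EF0) invEF.
  by rewrite /trunc_logder -take_polyMr uv take_polyMr.
have -> : 'X * (E * F)^`() * (u * v) =
    'X * E^`() * u * (F * v) + 'X * F^`() * v * (E * u) by rewrite derivM; ring.
by rewrite take_polyD !take_polyM_trunc_inv.
Qed.

Lemma coef_prod_XsubC_top d (r : 'I_d -> R) :
  (\prod_(i < d) ('X - (r i)%:P))`_d = 1.
Proof.
have /monicP := monic_prod_XsubC (index_enum 'I_d) xpredT r.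
by rewrite lead_coefE size_prod_XsubC /index_enum unlock -enumT size_enum_ord.
Qed.

End TruncatedSeries.

Section RectangularRTransform.
Variable R : realFieldType.
Implicit Types p q : {poly R}.

Definition Eweight (m d i : nat) : R :=
  (-1) ^+ i * ((m * d) ^ i)%:R * ((m - i)`! * (d - i)`!)%:R / ((m`! * d`!)%:R).

Lemma coef_Epoly m d p k :
  (Epoly m d p)`_k = if (k < d.+1)%N then Eweight m d k * acoef d p k else 0.
Proof.
have -> : Epoly m d p = \poly_(i < d.+1) (Eweight m d i * acoef d p i).
  by rewrite poly_def.
exact: coef_poly.
Qed.

Lemma fact_natr_neq0 n : ((n`!)%:R : R) != 0.
Proof. by rewrite pnatr_eq0 -lt0n fact_gt0. Qed.

Lemma Epoly_coef0 m d p : (Epoly m d p)`_0 = p`_d.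
Proof.
rewrite coef_Epoly /Eweight /acoef !expr0 !subn0 expn0 !mul1r mulfV ?mul1r //.
by rewrite natrM mulf_neq0 // fact_natr_neq0.
Qed.

Lemma acoef_rconv m d p q k : (k <= d)%N ->
  acoef d (rconv m d p q) k =
  \sum_(i < k.+1) convCoef R m d i (k - i) k * acoef d p i * acoef d q (k - i).
Proof.
move=> kd; rewrite {1}/acoef /rconv coef_sum.
rewrite (bigD1 (Ordinal (kd : (k < d.+1)%N))) //= [X in _ + X]big1 ?addr0.
  by rewrite coefMC coefXn eqxx mul1r mulrA -exprMn mulrNN mulr1 expr1n mul1r.
move=> j /eqP nej; rewrite coefMC coefXn; case: eqP => [eq_dj_dk|]; last by rewrite mul0r.
by case: nej; apply: val_inj => /=; have := ltn_ord j; lia.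
Qed.

Lemma Eweight_convCoef m d i k : (i <= k)%N -> (k <= d)%N -> (d <= m)%N ->
  Eweight m d k * convCoef R m d i (k - i) k = Eweight m d i * Eweight m d (k - i).
Proof.
move=> ik kd dm; rewrite /Eweight /convCoef -[in (_ ^ k)%N](subnKC ik).
rewrite -[in ((-1) ^+ k)](subnKC ik) !natrM !natrX !exprD.
have := fact_natr_neq0 (m - k); have := fact_natr_neq0 (d - k).
have := fact_natr_neq0 m; have := fact_natr_neq0 d.
move: ((m - k)`!%:R) ((d - k)`!%:R) (m`!%:R) (d`!%:R) => A B C D D0 C0 B0 A0.
by field; rewrite A0 B0 C0 D0.
Qed.

Lemma take_Epoly_rconv m d p q : (d <= m)%N ->
  take_poly d.+1 (Epoly m d (rconv m d p q)) =
  take_poly d.+1 (Epoly m d p * Epoly m d q).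
Proof.
move=> dm; apply/polyP => k; rewrite !coef_take_poly; case: ifP => // ltkd.
rewrite coef_Epoly ltkd acoef_rconv // coefM mulr_sumr.
apply: eq_bigr => -[i /= ltik] _; rewrite !coef_Epoly !ifT; try lia.
transitivity (Eweight m d k * convCoef R m d i (k - i) k *
              (acoef d p i * acoef d q (k - i))); first by ring.
by rewrite Eweight_convCoef //; ring.
Qed.

Lemma RtransE m d p :
  Rtrans m d p = - (d%:R)^-1 *: trunc_logder d.+1 (Epoly m d p).
Proof. by rewrite /Rtrans /trunc_logder -take_polyZ -scalerAl. Qed.

End RectangularRTransform.

Theorem mainTheorem1 (R : realFieldType) (m d : nat) (p q : {poly R}) :
  (1 <= d)%N -> (d <= m)%N ->
  (exists r : 'I_d -> R, (forall i, 0 <= r i) /\ p = \prod_(i < d) ('X - (r i)%:P)) ->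
  (exists r : 'I_d -> R, (forall i, 0 <= r i) /\ q = \prod_(i < d) ('X - (r i)%:P)) ->
  Rtrans m d (rconv m d p q) = Rtrans m d p + Rtrans m d q.
Proof.
move=> _ dm [r [_ ->]] [s [_ ->]].
rewrite !RtransE (trunc_logder_take (take_Epoly_rconv _ _ dm)) -scalerDr.
by rewrite trunc_logderM // Epoly_coef0 coef_prod_XsubC_top.
Qed.
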